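(* Let $\mathcal{A}$ be a bounded PTA, $s$ a symbolic state of $\mathcal{A}$, $x$ a clock, and $M(x)\in\mathbb{N}$ with $M(x)\ge \mathrm{maxC}^x(\mathcal{A})$. Let $\nu$ be a parameter valuation within the parameter domain, and let $(l,v)\in \nu(\mathrm{Ext}^x_{M(x)}(s))$ be a concrete state of $\nu(\mathcal{A})$. Then there exists a state $(l,v')\in\nu(s)$ such that $(l,v)$ and $(l,v')$ are bisimilar in $\nu(\mathcal{A})$.
   Context: A PTA is $\mathcal{A}=(\Sigma,L,l_0,L_F,X,P,\mathbb{D},I,E)$: finite actions $\Sigma$, finite locations $L$, initial $l_0$, accepting $L_F$, clocks $X$ (real-valued, $\ge0$), parameters $P$, parameter domain $\mathbb{D}(p)=(\mathbb{D}^-(p),\mathbb{D}^+(p))$ with admissible values $[\mathbb{D}^-(p),\mathbb{D}^+(p)]$, invariants $I(l)$ (clock guards), and edges $(l,g,a,R,l')$ with guard $g$ and reset set $R\subseteq X$. A simple clock guard is $x\bowtie\sum_i\alpha_ip_i+z$ with $\alpha_i,z\in\mathbb{Z}$, ${\bowtie}\in\{<,\le,=,\ge,>\}$; a clock guard is a conjunction of them. $\mathcal{A}$ is bounded if all $\mathbb{D}^\pm(p)$ are finite. $G^x(\mathcal{A})$ is the set of simple clock guards in which $x$ appears among the conjuncts of guards and invariants. For $g: x\bowtie\sum_i\alpha_ip_i+z$, $\mathrm{maxC}(g)=\sum_i\alpha_i\gamma_i+z$ with $\gamma_i=\mathbb{D}^-(p_i)$ if $\alpha_i<0$, $\mathbb{D}^+(p_i)$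 if $\alpha_i>0$, $0$ otherwise; $\mathrm{maxC}^x(\mathcal{A})=\max_{g\in G^x(\mathcal{A})}\mathrm{maxC}(g)$. For a parameter valuation $\nu$, $\nu(\mathcal{A})$ is the timed automaton obtained by substituting $\nu(p)$ for each $p$; its semantics is the transition system with states $(l,v)$ ($v$ a clock valuation satisfying $\nu(I(l))$), delay transitions $(l,v)\to(l,v+d)$ if all intermediate $(l,v+d')$, $d'\in[0,d]$, are states, and discrete transitions along edges $(l,g,a,R,l')$ from $(l,v)$ to $(l',v[R:=0])$ if $v$ satisfies $\nu(g)$ and both are states. Two states are bisimilar if they are related by a bisimulation of this labelled transition system (labels: delays $d$ and edges $e$). A symbolic state is a pair $(l,C)$ with $C$ a set of valuations of $X\cup P$; $\nu(s)=\{(l,v)\mid (v,\nu)\in C\}$. Cylindrification: $\mathrm{Cyl}_x(C)=\{w\mid\exists w'\in C,\ w'(y)=w(y)\ \forall y\ne x,\ w(x)\ge0\}$. $\mathrm{Ext}^x_M(C)=(C\cap(x\le M))\cup(\mathrm{Cyl}_x(C\cap(x>M))\cap(x>M))$, applied to a symbolic state via its constraint. *)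

From mathcomp Require Import all_boot.
From Stdlib Require Import Reals ZArith.

Set Implicit Arguments.
Unset Strict Implicit.
Unset Printing Implicit Defensive.

Local Open Scope R_scope.

Inductive cmp := CLt | CLe | CEq | CGe | CGt.

Definition cmp_sat (c : cmp) (a b : R) : Prop :=
  match c with
  | CLt => a < b | CLe => a <= b | CEq => a = b | CGe => a >= b | CGt => a > b
  end.

Section PTA.
Variables (Sigma L X P : finType).

Record sguard := SGuard {
  sg_clock : X;
  sg_op : cmp;
  sg_coef : P -> Z;
  sg_const : Z }.

Definition guard := seq sguard.

Record edge := Edge {
  e_src : L;
  e_guard : guard;
  e_act : Sigma;
  e_reset : seq X;
  e_tgt : L }.

(** Parameter domain bounds: [None] encodes -oo (lower) / +oo (upper). *)
Record pta := PTA {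
  p_init : L;
  p_acc : pred L;
  p_Dlo : P -> option R;
  p_Dhi : P -> option R;
  p_inv : L -> guard;
  p_edges : seq edge }.

Definition pta_bounded (A : pta) : Prop :=
  forall p, p_Dlo A p <> None /\ p_Dhi A p <> None.

Definition pta_admissible (A : pta) (nu : P -> R) : Prop :=
  forall p,
    (forall lo, p_Dlo A p = Some lo -> lo <= nu p) /\
    (forall hi, p_Dhi A p = Some hi -> nu p <= hi).

Definition lin_eval (a : P -> Z) (z : Z) (nu : P -> R) : R :=
  foldr (fun p acc => IZR (a p) * nu p + acc) (IZR z) (enum P).

Definition sguard_sat (nu : P -> R) (v : X -> R) (g : sguard) : Prop :=
  cmp_sat (sg_op g) (v (sg_clock g)) (lin_eval (sg_coef g) (sg_const g) nu).

Definition guard_sat (nu : P -> R) (v : X -> R) (g : guard) : Prop :=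
  forall sg, List.In sg g -> sguard_sat nu v sg.

(** maxC(g) = sum_i alpha_i gamma_i + z  (default 0 for an infinite bound,
    irrelevant under boundedness). *)
Definition gamma (A : pta) (a : P -> Z) (p : P) : R :=
  if (a p <? 0)%Z then odflt 0 (p_Dlo A p)
  else if (0 <? a p)%Z then odflt 0 (p_Dhi A p)
  else 0.

Definition maxC (A : pta) (g : sguard) : R :=
  foldr (fun p acc => IZR (sg_coef g p) * gamma A (sg_coef g) p + acc)
        (IZR (sg_const g)) (enum P).

Definition Gx (A : pta) (x : X) : seq sguard :=
  [seq g <- flatten ([seq p_inv A l | l <- enum L] ++ [seq e_guard e | e <- p_edges A])
   | sg_clock g == x].

(** maxC^x(A) = max over G^x(A); the max over an empty set is taken as 0
    (harmless since M(x) is a natural number). *)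
Definition maxCx (A : pta) (x : X) : R :=
  foldr Rmax 0 [seq maxC A g | g <- Gx A x].

Definition cstate : Type := (L * (X -> R))%type.

Definition is_state (A : pta) (nu : P -> R) (s : cstate) : Prop :=
  (forall x, 0 <= s.2 x) /\ guard_sat nu s.2 (p_inv A s.1).

Definition delay (v : X -> R) (d : R) : X -> R := fun x => v x + d.

Definition reset (v : X -> R) (Rs : seq X) : X -> R :=
  fun x => if x \in Rs then 0 else v x.

Inductive label := LDelay of R | LEdge of edge.

Definition step (A : pta) (nu : P -> R) (s : cstate) (lab : label) (s' : cstate)
  : Prop :=
  match lab with
  | LDelay d =>
      0 <= d /\ s'.1 = s.1 /\ s'.2 = delay s.2 d /\
      (forall d', 0 <= d' <= d -> is_state A nu (s.1, delay s.2 d'))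
  | LEdge e =>
      List.In e (p_edges A) /\ s.1 = e_src e /\ s'.1 = e_tgt e /\
      guard_sat nu s.2 (e_guard e) /\ s'.2 = reset s.2 (e_reset e) /\
      is_state A nu s /\ is_state A nu s'
  end.

Definition bisimulation (A : pta) (nu : P -> R) (Rel : cstate -> cstate -> Prop)
  : Prop :=
  forall s1 s2, Rel s1 s2 ->
    (forall lab s1', step A nu s1 lab s1' ->
       exists s2', step A nu s2 lab s2' /\ Rel s1' s2') /\
    (forall lab s2', step A nu s2 lab s2' ->
       exists s1', step A nu s1 lab s1' /\ Rel s1' s2').

Definition bisimilar (A : pta) (nu : P -> R) (s1 s2 : cstate) : Prop :=
  is_state A nu s1 /\ is_state A nu s2 /\
  exists Rel, bisimulation A nu Rel /\ Rel s1 s2.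

Definition constr : Type := (X -> R) -> (P -> R) -> Prop.

Record symstate := SymState { ss_loc : L; ss_constr : constr }.

Definition in_inst (nu : P -> R) (s : symstate) (c : cstate) : Prop :=
  c.1 = ss_loc s /\ ss_constr s c.2 nu.

Definition Cyl (x : X) (C : constr) : constr :=
  fun v nu => (exists v', C v' nu /\ (forall y, y != x -> v' y = v y)) /\ 0 <= v x.

Definition Ext (x : X) (M : R) (C : constr) : constr :=
  fun v nu =>
    (C v nu /\ v x <= M) \/
    (Cyl x (fun v' nu' => C v' nu' /\ v' x > M) v nu /\ v x > M).

Definition ExtS (x : X) (M : R) (s : symstate) : symstate :=
  SymState (ss_loc s) (Ext x M (ss_constr s)).

End PTA.

From mathcomp Require Import all_boot.
From Stdlib Require Import Reals ZArith Lra Lia Psatz.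
From Stdlib Require List.
Local Open Scope R_scope.

Set Implicit Arguments.
Unset Strict Implicit.

(** Under an admissible bounded valuation every guard on [x] compares [x]
    with a value at most [maxC^x(A) <= M].  Hence two valuations that agree
    off [x], and on [x] either agree or both exceed [M], satisfy the same
    guards and invariants.  This relation survives delays and resets, so it
    is a bisimulation.  A point of [Ext^x_M(s)] either lies in [s] or arises
    from a point of [s] above [M] by moving [x] elsewhere above [M]; in both
    cases it is related to a point of [s]. *)

Section AgreeBeyond.
Variables (Sigma L X P : finType) (A : pta Sigma L X P) (nu : P -> R).
Variables (x : X) (M : R).

Definition agree_beyond (w1 w2 : X -> R) : Prop :=
  (forall y, y != x -> w1 y = w2 y) /\ (w1 x = w2 x \/ M < w1 x /\ M < w2 x).

Definition agree_beyond_state (s1 s2 : cstate L X) : Prop :=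
  s1.1 = s2.1 /\ agree_beyond s1.2 s2.2.

Definition sguard_of (sg : sguard X P) : Prop :=
  (exists l, List.In sg (p_inv A l)) \/
  (exists e, List.In e (p_edges A) /\ List.In sg (e_guard e)).

Definition guards_below : Prop := forall sg, sguard_of sg -> sg_clock sg = x ->
  lin_eval (sg_coef sg) (sg_const sg) nu <= M.

Lemma agree_beyond_sym w1 w2 : agree_beyond w1 w2 -> agree_beyond w2 w1.
Proof.
move=> [Hoff Hx]; split; first by move=> y /Hoff ->.
by case: Hx => [->|[]]; [left|right].
Qed.

Lemma agree_beyond_delay w1 w2 d :
  0 <= d -> agree_beyond w1 w2 -> agree_beyond (delay w1 d) (delay w2 d).
Proof.
move=> Hd [Hoff Hx]; split; first by move=> y /Hoff; rewrite /delay => ->.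
rewrite /delay; case: Hx => [->|[H1 H2]]; [left|right]; lra.
Qed.

Lemma agree_beyond_reset w1 w2 Rs :
  agree_beyond w1 w2 -> agree_beyond (reset w1 Rs) (reset w2 Rs).
Proof.
move=> [Hoff Hx]; split; first by move=> y /Hoff; rewrite /reset => ->.
by rewrite /reset; case: (x \in Rs); [left|].
Qed.

Lemma sguard_sat_agree w1 w2 sg :
  (sg_clock sg = x -> lin_eval (sg_coef sg) (sg_const sg) nu <= M) ->
  agree_beyond w1 w2 -> sguard_sat nu w1 sg -> sguard_sat nu w2 sg.
Proof.
rewrite /sguard_sat => Hbound [Hoff Hx].
case: (eqVneq (sg_clock sg) x) => [Hclock|/Hoff <-] //.
move: (Hbound Hclock); rewrite Hclock.
case: Hx => [->|[H1 H2]] // Hc.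
by case: (sg_op sg) => /=; lra.
Qed.

Hypothesis M_ge0 : 0 <= M.
Hypothesis guards_x_below : guards_below.

Lemma guard_sat_agree w1 w2 (g : guard X P) :
  (forall sg, List.In sg g -> sguard_of sg) ->
  agree_beyond w1 w2 -> guard_sat nu w1 g -> guard_sat nu w2 g.
Proof.
move=> Hg Hw Hsat sg Hsg.
apply: (sguard_sat_agree _ Hw (Hsat _ Hsg)).
exact: guards_x_below (Hg _ Hsg).
Qed.

Lemma is_state_agree l w1 w2 :
  agree_beyond w1 w2 -> is_state A nu (l, w1) -> is_state A nu (l, w2).
Proof.
move=> Hw [Hpos Hinv]; split => /=.
- move=> y; case: (eqVneq y x) => [->|/Hw.1 <-] //.
  by case: Hw.2 => [<-|[_ ?]] //; lra.
- by apply: (guard_sat_agree _ Hw Hinv) => sg Hsg; left; exists l.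
Qed.

Lemma step_agree s1 s2 lab s1' :
  agree_beyond_state s1 s2 -> step A nu s1 lab s1' ->
  exists s2', step A nu s2 lab s2' /\ agree_beyond_state s1' s2'.
Proof.
case: s1 s2 s1' => [l w1] [_ w2] [l' w1'] [/= <- Hw]; case: lab => [d|e] /=.
- move=> [Hd [-> [-> Hpath]]].
  exists (l, delay w2 d); split; last by split=> //; exact: agree_beyond_delay.
  do 3 split=> //; move=> d' Hd'.
  by apply: (is_state_agree (agree_beyond_delay _ Hw) (Hpath _ Hd')); lra.
- move=> [He [Hsrc [Htgt [Hg [Hw1' [Hs Hs']]]]]].
  have Hw' : agree_beyond w1' (reset w2 (e_reset e)).
    by rewrite Hw1'; exact: agree_beyond_reset.
  exists (l', reset w2 (e_reset e)); split=> //.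
  do 3 split=> //; split.
    by apply: (guard_sat_agree _ Hw Hg) => sg Hsg; right; exists e.
  by do 2 split=> //; [exact: is_state_agree Hw Hs|exact: is_state_agree Hw' Hs'].
Qed.

Lemma agree_beyond_bisimulation : bisimulation A nu agree_beyond_state.
Proof.
have sym s1 s2 : agree_beyond_state s1 s2 -> agree_beyond_state s2 s1.
  by move=> [Hl Hw]; split; [|exact: agree_beyond_sym].
move=> s1 s2 Hs; split; first by move=> lab s1'; exact: step_agree.
move=> lab s2' /(step_agree (sym _ _ Hs)) [s1' [Hstep /sym Hs']].
by exists s1'.
Qed.

End AgreeBeyond.

Section MaxConstant.
Variables (Sigma L X P : finType) (A : pta Sigma L X P) (nu : P -> R).
Hypothesis A_bounded : pta_bounded A.
Hypothesis nu_admissible : pta_admissible A nu.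

Lemma gamma_bound (a : P -> Z) p : IZR (a p) * nu p <= IZR (a p) * gamma A a p.
Proof.
rewrite /gamma; case: (Z.ltb_spec (a p) 0) => [Hneg|Hnneg].
  have := (A_bounded p).1; case E: (p_Dlo A p) => [lo|] // _ /=.
  have := (nu_admissible p).1 _ E; have := IZR_lt _ _ Hneg; nra.
case: (Z.ltb_spec 0 (a p)) => [Hpos|Hnpos].
  have := (A_bounded p).2; case E: (p_Dhi A p) => [hi|] // _ /=.
  have := (nu_admissible p).2 _ E; have := IZR_lt _ _ Hpos; nra.
have -> : a p = 0%Z by lia.
by rewrite !Rmult_0_l; apply: Rle_refl.
Qed.

Lemma lin_eval_le_maxC sg : lin_eval (sg_coef sg) (sg_const sg) nu <= maxC A sg.
Proof.
rewrite /lin_eval /maxC; elim: (enum P) => [|p ps IH] /=; first exact: Rle_refl.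
exact: Rplus_le_compat (gamma_bound _ _) IH.
Qed.

Lemma In_enum (T : finType) (t : T) : List.In t (enum T).
Proof.
have : t \in enum T by rewrite mem_enum.
elim: (enum T) => //= u s IH; rewrite in_cons => /orP [/eqP ->|/IH]; auto.
Qed.

Lemma In_Gx (sg : sguard X P) : sguard_of A sg -> List.In sg (Gx A (sg_clock sg)).
Proof.
move=> Hsg; apply/List.filter_In; split; last exact: eqxx.
apply/List.in_concat; case: Hsg => [[l Hl]|[e [He Hsg]]].
- exists (p_inv A l); split=> //; apply: List.in_or_app; left.
  exact/List.in_map/In_enum.
- exists (e_guard e); split=> //; apply: List.in_or_app; right; exact: List.in_map.
Qed.

Lemma foldr_Rmax_ge (T : Type) (f : T -> R) t (s : seq T) :
  List.In t s -> f t <= foldr Rmax 0 (map f s).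
Proof.
elim: s => //= u s IH [->|/IH Ht]; first exact: Rmax_l.
exact: Rle_trans Ht (Rmax_r _ _).
Qed.

Lemma guards_below_maxCx (x : X) (M : R) :
  maxCx A x <= M -> guards_below A nu x M.
Proof.
move=> HM sg Hsg Hclock; apply: Rle_trans (lin_eval_le_maxC sg) _.
apply: Rle_trans HM; rewrite -Hclock.
exact/foldr_Rmax_ge/In_Gx.
Qed.

End MaxConstant.

Theorem mainTheorem3 (Sigma L X P : finType) (A : pta Sigma L X P)
  (s : symstate L X P) (x : X) (Mx : nat) (nu : P -> R) (l : L) (v : X -> R) :
  pta_bounded A ->
  maxCx A x <= INR Mx ->
  pta_admissible A nu ->
  in_inst nu (ExtS x (INR Mx) s) (l, v) ->
  is_state A nu (l, v) ->
  exists v', in_inst nu s (l, v') /\ bisimilar A nu (l, v) (l, v').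
Proof.
move=> Hbounded HmaxC Hadm [/= Hl Hext] Hstate.
have Hguards := guards_below_maxCx Hbounded Hadm HmaxC.
have [v' [Hs Hw]] : exists v', ss_constr s v' nu /\ agree_beyond x (INR Mx) v v'.
  case: Hext => [[Hs _]|[[[v' [[Hs Hv'x] Hoff]] _] Hvx]].
  - by exists v; split=> //; split=> //; left.
  - by exists v'; split=> //; split; [move=> y /Hoff|right].
exists v'; split; first by split.
split=> //; split; first exact: (is_state_agree (pos_INR Mx) Hguards Hw Hstate).
exists (agree_beyond_state (L:=L) x (INR Mx)); split; last by [].
exact: agree_beyond_bisimulation (pos_INR Mx) Hguards.
Qed.
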